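(* There exist an $\mathrm{FO}$-convergent sequence of finite graphs $(G_n)_{n\in\mathbb{N}}$ and a first-order formula $\xi(x)$ in the language of graphs with one free variable, satisfying $G_n\models(\exists x)\xi(x)$ for all $n$, such that there is no sequence $(r_n)$ with $r_n\in\xi(G_n)$ for which the sequence of rooted graphs $(G_n,r_n)$ is $\mathrm{FO}$-convergent.
   Context: Graphs are first-order structures in the language with one binary (edge) relation. For a formula $\phi$ with $p$ free variables and a structure $G$, $\phi(G)=\{\mathbf{v}\in V(G)^p : G\models\phi(\mathbf{v})\}$. The Stone pairing of $\phi$ ($p\ge1$) with a finite graph $G$ is $\langle\phi,G\rangle=|\phi(G)|/|V(G)|^p$; for sentences it is $1$ if $G\models\phi$ and $0$ otherwise. A sequence of finite graphs $(G_n)$ is $\mathrm{FO}$-convergent if $(\langle\phi,G_n\rangle)$ converges for every first-order formula $\phi$. The language of rooted graphs adds a constant symbol $\mathrm{Root}$; $(G,r)$ is $G$ with $\mathrm{Root}$ interpreted as the vertex $r$. A sequence of rooted finite graphs $(G_n,r_n)$ is $\mathrm{FO}$-convergent if $(\langle\phi,(G_n,r_n)\rangle)$ converges for every first-order formula $\phi$ in the language of rooted graphs (Stone pairings defined in the same way). *)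

From Stdlib Require Import Reals.
From mathcomp Require Import all_boot.

Set Implicit Arguments.
Unset Strict Implicit.
Unset Printing Implicit Defensive.

Record fsgraph := FGraph {
  gsize : nat;
  gadj : rel 'I_gsize;
  gadj_sym : symmetric gadj;
  gadj_irr : irreflexive gadj }.

Definition vert (G : fsgraph) := 'I_(gsize G).

(* First-order syntax for the language of rooted graphs (one binary relation
   and a constant symbol Root), with de Bruijn variables.  The connectives
   =, Adj, not, and, exists are complete for first-order logic. *)
Inductive term := TVar of nat | TRoot.

Inductive formula :=
| FEq of term & term
| FAdj of term & term
| FNot of formula
| FAnd of formula & formula
| FEx of formula.

Definition term_no_root (t : term) : bool :=
  if t is TRoot then false else true.

Fixpoint no_root (phi : formula) : bool :=
  match phi with
  | FEq t1 t2 | FAdj t1 t2 => term_no_root t1 && term_no_root t2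
  | FNot f => no_root f
  | FAnd f g => no_root f && no_root g
  | FEx f => no_root f
  end.

Definition tbound (t : term) : nat := if t is TVar k then k.+1 else 0.

Fixpoint fbound (phi : formula) : nat :=
  match phi with
  | FEq t1 t2 | FAdj t1 t2 => maxn (tbound t1) (tbound t2)
  | FNot f => fbound f
  | FAnd f g => maxn (fbound f) (fbound g)
  | FEx f => (fbound f).-1
  end.

Definition ext {T} (x : T) (e : nat -> T) : nat -> T :=
  fun k => match k with 0 => x | k'.+1 => e k' end.

(* Satisfaction.  [root] is the interpretation of Root (None for unrooted
   graphs), [e] the variable assignment (None = unassigned). *)
Definition eval_term (G : fsgraph) (root : option (vert G))
  (e : nat -> option (vert G)) (t : term) : option (vert G) :=
  match t with TVar k => e k | TRoot => root end.

Fixpoint sat (G : fsgraph) (root : option (vert G))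
  (e : nat -> option (vert G)) (phi : formula) : bool :=
  match phi with
  | FEq t1 t2 =>
      match eval_term root e t1, eval_term root e t2 with
      | Some a, Some b => a == b | _, _ => false end
  | FAdj t1 t2 =>
      match eval_term root e t1, eval_term root e t2 with
      | Some a, Some b => gadj a b | _, _ => false end
  | FNot f => ~~ sat root e f
  | FAnd f g => sat root e f && sat root e g
  | FEx f => [exists v : vert G, sat root (ext (Some v) e) f]
  end.

Definition tuple_env (G : fsgraph) (p : nat) (v : {ffun 'I_p -> vert G})
  : nat -> option (vert G) :=
  fun k => omap v (insub k : option 'I_p).

Definition solutions (G : fsgraph) (root : option (vert G)) (phi : formula)
  : {set {ffun 'I_(fbound phi) -> vert G}} :=
  [set v | sat root (tuple_env v) phi].

(* Stone pairing <phi, G> = |phi(G)| / |V(G)|^p ; for sentences (p = 0)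
   this is 1 if G |= phi and 0 otherwise. *)
Definition stone (G : fsgraph) (root : option (vert G)) (phi : formula) : R :=
  Rdiv (INR #|solutions root phi|) (INR (expn (gsize G) (fbound phi))).

Definition FO_convergent (G : nat -> fsgraph) : Prop :=
  forall phi : formula, no_root phi ->
    exists l : R, Un_cv (fun n => @stone (G n) None phi) l.

Definition FO_convergent_rooted (G : nat -> fsgraph)
  (r : forall n, vert (G n)) : Prop :=
  forall phi : formula,
    exists l : R, Un_cv (fun n => @stone (G n) (Some (r n)) phi) l.

Definition sat1 (G : fsgraph) (xi : formula) (v : vert G) : bool :=
  @sat G None (ext (Some v) (fun _ => None)) xi.

Definition models (G : fsgraph) (phi : formula) : bool :=
  @sat G None (fun _ => None) phi.

From Stdlib Require Import Reals Lra Classical.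
From mathcomp Require Import all_boot zify.

Set Implicit Arguments.
Unset Strict Implicit.
Unset Printing Implicit Defensive.

(* G_n consists of a clique on {0..n} together with all functions
   b : {0..n} -> {0..K_n-1}, where b is adjacent to the clique vertex a iff
   b a < k_n; here K_n = 3(n+1)^2 and k_n alternates between K_n/3 and 2K_n/3.

   Call a p-tuple of function vertices generic if every adjacency pattern to
   it is realised by at least 2^q clique vertices.  An Ehrenfeucht-Fraisse
   game, whose invariant compares, for each pattern, the numbers of unused
   clique vertices realising it up to 2^q, shows that all generic tuples of
   all G_n with n >= p + q satisfy the same formulas of quantifier depth q.
   Cutting the clique into 2^q blocks, a union bound shows that the proportion
   of generic tuples tends to 1, so every Stone pairing tends to 0 or 1.

   The formula xi(x), "x has two distinct non-adjacent neighbours", holds only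
   at clique vertices, and a clique vertex is adjacent to a proportion close to
   k_n/K_n of all vertices, alternately about 1/3 and 2/3.  So the pairing of
   "Root ~ x_0" oscillates, whatever roots are chosen in xi(G_n). *)

Lemma card_ltn_ord K k c : k <= K ->
  #|[set v : 'I_K | (v < k) == c]| = if c then k else K - k.
Proof.
move=> kK; have lo : #|[set v : 'I_K | v < k]| = k.
  have inj : injective (widen_ord kK) by move=> u w /(congr1 val) /= /val_inj.
  rewrite -[RHS](card_ord k) -(card_imset _ inj); apply: eq_card => v.
  rewrite !inE; apply/idP/imsetP => [vk|[w _ ->]]; last exact: (ltn_ord w).
  by exists (Ordinal vk) => //; apply: val_inj.
case: c => /=; first by rewrite -[RHS]lo; apply: eq_card => v; rewrite !inE eqb_id.
rewrite -[in RHS](card_ord K) -(cardsC [set v : 'I_K | v < k]) lo addKn.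
by apply: eq_card => v; rewrite !inE eqbF_neg.
Qed.

Lemma card_set_eqb (T : finType) (S : {set T}) (Y : pred T) c :
  #|[set a in S | Y a == c]| =
  if c then #|[set a in S | Y a]| else #|S| - #|[set a in S | Y a]|.
Proof.
case: c; first by apply: eq_card => a; rewrite !inE eqb_id.
have -> : [set a in S | Y a] = S :&: [set a | Y a] by apply/setP => a; rewrite !inE.
by rewrite -cardsD; apply: eq_card => a; rewrite !inE eqbF_neg andbC.
Qed.

Lemma exists_notin (T : finType) (S : {set T}) (s : seq T) :
  size s < #|S| -> exists2 v, v \in S & v \notin s.
Proof.
move=> sS; apply/exists_inP; apply: contraTT sS => /exists_inPn sub.
rewrite -leqNgt; apply: leq_trans (card_size s).
by apply/subset_leq_card/subsetP => v /sub; rewrite negbK.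
Qed.

Lemma card_take_enum (T : finType) (S : {set T}) (Y : pred T) j :
  {in S, forall a, Y a = (a \in take j (enum S))} -> j <= #|S| ->
  #|[set a in S | Y a]| = j.
Proof.
move=> YS jS; have -> : [set a in S | Y a] = [set a in take j (enum S)].
  apply/setP => a; rewrite !inE; case: (boolP (a \in S)) => [/YS //|aS].
  by apply/esym/negP => /mem_take; rewrite mem_enum (negbTE aS).
rewrite cardsE (card_uniqP _) ?take_uniq ?enum_uniq //.
by rewrite size_takel // -cardE.
Qed.

Lemma card_le_sum_cover (I T : finType) (A : {set T}) (F : I -> {set T}) :
  A \subset \bigcup_i F i -> #|A| <= \sum_i #|F i|.
Proof.
move=> /subset_leq_card /leq_trans; apply; elim/big_rec2: _ => [|i B n _ IH].
  by rewrite cards0.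
by apply: leq_trans (leq_card_setU _ _).1 _; rewrite leq_add2l.
Qed.

Lemma card_family_prod (aT rT : finType) (F : aT -> pred rT) :
  #|family F| = \prod_x #|F x|.
Proof. by rewrite card_family foldrE big_map big_enum. Qed.

Lemma prod_nat_if (I : finType) (P : pred I) x y :
  \prod_(i : I) (if P i then x else y) =
  x ^ #|[set i | P i]| * y ^ (#|I| - #|[set i | P i]|).
Proof.
rewrite (bigID P) /= (eq_bigr (fun _ => x)) => [|i ->//].
rewrite [X in _ * X](eq_bigr (fun _ => y)) => [|i /negbTE ->//].
rewrite !prod_nat_const -(cardC [set i | P i]) addKn.
by congr (_ ^ _ * _ ^ _); apply: eq_card => i; rewrite !inE.
Qed.

Lemma card_set_sum (A B : finType) (P : pred (A + B)) :
  #|[set u | P u]| = #|[set a | P (inl a)]| + #|[set b | P (inr b)]|.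
Proof. by rewrite -!sum1dep_card big_sumType. Qed.

Lemma card_block_geq m L c (g : 'I_c) : L = m %/ c -> L <= #|[set a : 'I_m | a %/ L == g]|.
Proof.
move=> defL; case: (posnP L) => [->//|L0].
have lt_m (j : 'I_L) : g * L + j < m.
  apply: leq_trans (_ : g.+1 * L <= m); first by rewrite mulSn addnC ltn_add2r.
  by apply: leq_trans (leq_divM m c); rewrite -defL mulnC leq_mul2l ltn_ord orbT.
have inj : injective (fun j : 'I_L => Ordinal (lt_m j)).
  by move=> j1 j2 /(congr1 val) /= /addnI /val_inj.
rewrite -[X in X <= _](card_ord L) -(card_imset predT inj).
apply/subset_leq_card/subsetP => a /imsetP[j _ ->]; rewrite inE /=.
by rewrite divnMDl // divn_small // addn0.
Qed.

Lemma card_hits_blocks m (S : {set 'I_m}) c L :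
  (forall g : 'I_c, exists2 a, a \in S & a %/ L = g) -> c <= #|S|.
Proof.
move=> hit; have sub : {subset iota 0 c <= [seq val a %/ L | a <- enum S]}.
  move=> g; rewrite mem_iota => /andP[_ gc]; have [a aS ag] := hit (Ordinal gc).
  by apply/mapP; exists a; rewrite ?mem_enum ?ag.
by have := uniq_leq_size (iota_uniq 0 c) sub; rewrite size_iota size_map -cardE.
Qed.

Section RealEstimates.

Local Open Scope R_scope.

Lemma INR_addn a b : INR (a + b) = INR a + INR b.
Proof. by rewrite -plusE plus_INR. Qed.

Lemma INR_muln a b : INR (a * b) = INR a * INR b.
Proof. by rewrite -multE mult_INR. Qed.

Lemma INR_expn a b : INR (a ^ b) = INR a ^ b.
Proof. by elim: b => [|b IH]; rewrite ?expn0 // expnS INR_muln IH. Qed.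

Lemma INR_subn a b : (b <= a)%N -> INR (a - b) = INR a - INR b.
Proof. by move=> /leP ba; rewrite -minusE minus_INR. Qed.

Lemma INR_leq a b : (a <= b)%N -> INR a <= INR b.
Proof. by move/leP; apply: le_INR. Qed.

Lemma Rle_div_r a b c : 0 < c -> a * c <= b -> a <= b / c.
Proof.
by move=> c0 abc; apply: (Rmult_le_reg_r c) => //; rewrite /Rdiv Rmult_assoc Rinv_l; lra.
Qed.

Lemma Rle_div_l a b c : 0 < c -> b <= a * c -> b / c <= a.
Proof.
by move=> c0 bac; apply: (Rmult_le_reg_r c) => //; rewrite /Rdiv Rmult_assoc Rinv_l; lra.
Qed.

Lemma Rlt_div_l a b c : 0 < c -> b < a * c -> b / c < a.
Proof.
by move=> c0 bac; apply: (Rmult_lt_reg_r c) => //; rewrite /Rdiv Rmult_assoc Rinv_l; lra.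
Qed.

Lemma bernoulli x p : 0 <= x <= 1 -> 1 - INR p * x <= (1 - x) ^ p.
Proof.
move=> x01; elim: p => [|p IH]; first by rewrite /=; lra.
rewrite S_INR [_ ^ _.+1]/=; have := pos_INR p.
have : (1 - x) * (1 - INR p * x) <= (1 - x) * (1 - x) ^ p by apply: Rmult_le_compat_l; lra.
nra.
Qed.

Lemma pow_le_decr r a b : 0 <= r <= 1 -> (a <= b)%N -> r ^ b <= r ^ a.
Proof.
move=> r01 ab; rewrite -(subnKC ab) -plusE pow_add.
have : r ^ (b - a) <= 1 by rewrite -(pow1 (b - a)); apply: pow_incr.
by have := pow_le r a (proj1 r01); nra.
Qed.

Lemma inv_pow3_bounds p : 0 < / 3 ^ p <= 1.
Proof.
have p1 : 1 <= 3 ^ p by apply: pow_R1_Rle; lra.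
split; first by apply: Rinv_0_lt_compat; lra.
by rewrite -Rinv_1; apply: Rinv_le_contravar; lra.
Qed.

Lemma sum_INR_le (I : finType) (f : I -> nat) M :
  (forall i, INR (f i) <= M) -> INR (\sum_i f i) <= INR #|I| * M.
Proof.
move=> fM; rewrite -big_enum /= cardE.
elim: (enum I) => [|i s IH]; first by rewrite big_nil /=; lra.
by rewrite big_cons INR_addn [size _]/= S_INR; have := fM i; lra.
Qed.

Lemma ratio_subset (T : finType) (A B : {set T}) d :
  A \subset B -> INR #|A| / INR d <= INR #|B| / INR d.
Proof.
move=> /subset_leq_card /INR_leq AB; apply: Rmult_le_compat_r => //.
by case: d => [|d]; [rewrite Rinv_0; lra | apply/Rlt_le/Rinv_0_lt_compat/lt_0_INR; lia].
Qed.

Lemma ratio_le1 (T : finType) (A : {set T}) d : #|T| = d -> INR #|A| / INR d <= 1.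
Proof.
move=> <-; case: (posnP #|T|) => [T0|T0]; first by rewrite T0 /Rdiv Rinv_0; lra.
by apply: Rle_div_l; [apply: lt_0_INR; lia | rewrite Rmult_1_l; apply/INR_leq/max_card].
Qed.

Lemma ratio_disjoint (T : finType) (A B : {set T}) d : #|T| = d -> [disjoint A & B] ->
  INR #|A| / INR d <= 1 - INR #|B| / INR d.
Proof.
move=> Td; rewrite -(leq_card_setU A B).2 => /eqP AB.
suff : INR #|A| / INR d + INR #|B| / INR d <= 1 by lra.
by rewrite -Rdiv_plus_distr -INR_addn -AB; apply: ratio_le1.
Qed.

Lemma ratio_compl_le1 a d : 1 - INR a / INR d <= 1.
Proof.
suff : 0 <= INR a / INR d by lra.
case: d => [|d]; first by rewrite /Rdiv Rinv_0; lra.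
by apply: Rle_div_r; [apply: lt_0_INR; lia | rewrite Rmult_0_l; apply: pos_INR].
Qed.

Lemma cvg_1_of_lower_bound (a : nat -> R) A C r c N0 :
  0 <= r < 1 -> 0 < C -> (0 < c)%N ->
  (forall n, (N0 <= n)%N -> 1 - A / INR n.+1 - C * r ^ (n.+1 %/ c) <= a n <= 1) ->
  Un_cv a 1.
Proof.
move=> r01 C0 c0 bound e e0.
have [L0 rL0] := pow_lt_1_zero r ltac:(rewrite Rabs_right; lra) (e / (2 * C))
  ltac:(apply: Rdiv_lt_0_compat; lra).
have [N1 N1A] := INR_archimed (e / 2) A ltac:(lra).
exists (maxn N0 (maxn N1 (c * L0))) => n /leP; rewrite !geq_max => /and3P[N0n N1n Ln].
have n0 : 0 < INR n.+1 by apply: lt_0_INR; lia.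
have An : A / INR n.+1 < e / 2.
  apply: Rlt_div_l => //; apply: (Rlt_le_trans _ _ _ N1A); rewrite Rmult_comm.
  by apply: Rmult_le_compat_l; [lra | apply: INR_leq; lia].
have rn : C * r ^ (n.+1 %/ c) < e / 2.
  have /rL0 : (n.+1 %/ c >= L0)%coq_nat by apply/leP; rewrite leq_divRL //; lia.
  rewrite Rabs_right; last by apply: Rle_ge; apply: pow_le; lra.
  move=> /(Rmult_lt_compat_l C _ _ C0).
  by have -> : C * (e / (2 * C)) = e / 2 by field; lra.
have [lo hi] := bound n N0n.
by rewrite /R_dist Rabs_left1; lra.
Qed.

Lemma Un_cv_compl (b : nat -> R) : Un_cv (fun n => 1 - b n) 1 -> Un_cv b 0.
Proof.
move=> cv e e0; have [N HN] := cv e e0; exists N => n /HN.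
by rewrite /R_dist (_ : 1 - b n - 1 = - (b n - 0)) ?Rabs_Ropp //; ring.
Qed.

Lemma not_Un_cv_parity (a : nat -> R) lo hi N0 l : lo < hi ->
  (forall n, (N0 <= n)%N -> if odd n then a n <= lo else hi <= a n) -> ~ Un_cv a l.
Proof.
move=> lohi bound cvl; have [N HN] := cvl ((hi - lo) / 2) ltac:(lra).
have := bound (N + N0).*2 ltac:(lia); have := bound (N + N0).*2.+1 ltac:(lia).
have := HN (N + N0).*2 ltac:(apply/leP; lia).
have := HN (N + N0).*2.+1 ltac:(apply/leP; lia).
rewrite /= odd_double /= /R_dist /Rabs; do 2 case: Rcase_abs => ?; lra.
Qed.

End RealEstimates.

(** * Ehrenfeucht-Fraisse games *)

Fixpoint qdepth (phi : formula) : nat :=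
  match phi with
  | FEq _ _ | FAdj _ _ => 0
  | FNot f => qdepth f
  | FAnd f g => maxn (qdepth f) (qdepth g)
  | FEx f => (qdepth f).+1
  end.

Lemma eq_sat (G : fsgraph) root (e e' : nat -> option (vert G)) phi :
  e =1 e' -> sat root e phi = sat root e' phi.
Proof.
elim: phi e e' => [t1 t2|t1 t2|f IH|f IHf g IHg|f IH] e e' ee' /=.
- by case: t1 => [i|]; case: t2 => [j|] /=; rewrite ?ee'.
- by case: t1 => [i|]; case: t2 => [j|] /=; rewrite ?ee'.
- by rewrite (IH e e').
- by rewrite (IHf e e') // (IHg e e').
- by apply: eq_existsb => v; apply: IH => -[|k] /=.
Qed.

Definition seq_env (G : fsgraph) (s : seq (vert G)) (k : nat) : option (vert G) :=
  nth None (map Some s) k.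

Lemma sat_seq_env_cons (G : fsgraph) (v : vert G) s phi :
  sat None (ext (Some v) (seq_env s)) phi = sat None (seq_env (v :: s)) phi.
Proof. by apply: eq_sat => -[]. Qed.

Lemma seq_env_eqNone (G : fsgraph) (s : seq (vert G)) k :
  (seq_env s k == None) = (size s <= k).
Proof. by elim: s k => [|x s IH] [|k] //=; apply: IH. Qed.

Lemma seq_envP (G : fsgraph) (x0 : vert G) (s : seq (vert G)) i a :
  seq_env s i = Some a -> i < size s /\ nth x0 s i = a.
Proof. by elim: s i => [|y s IH] [|i] //= => [[->]|/IH]. Qed.

Definition partial_iso (G G' : fsgraph) (s : seq (vert G)) (s' : seq (vert G')) :=
  size s = size s' /\
  forall i j a b a' b', seq_env s i = Some a -> seq_env s j = Some b ->
    seq_env s' i = Some a' -> seq_env s' j = Some b' ->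
    (a == b) = (a' == b') /\ gadj a b = gadj a' b'.

Lemma partial_iso_atomic (G G' : fsgraph) (s : seq (vert G)) (s' : seq (vert G'))
    (f : rel (vert G)) (f' : rel (vert G')) i j :
  size s = size s' ->
  (forall a b a' b', seq_env s i = Some a -> seq_env s j = Some b ->
     seq_env s' i = Some a' -> seq_env s' j = Some b' -> f a b = f' a' b') ->
  (if seq_env s i is Some a then if seq_env s j is Some b then f a b else false
   else false) =
  (if seq_env s' i is Some a' then if seq_env s' j is Some b' then f' a' b' else false
   else false).
Proof.
move=> ss' Hf; have eqNone k : (seq_env s k == None) = (seq_env s' k == None).
  by rewrite !seq_env_eqNone ss'.
move: (eqNone i) (eqNone j) (Hf).
case: (seq_env s i) => [a|]; case: (seq_env s' i) => [a'|] //= _.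
by case: (seq_env s j) => [b|]; case: (seq_env s' j) => [b'|] //= _; apply.
Qed.

Section EhrenfeuchtFraisse.

Variables G G' : fsgraph.

Variable P : nat -> seq (vert G) -> seq (vert G') -> Prop.

Hypothesis P_iso : forall q s s', P q s s' -> partial_iso s s'.

Hypothesis P_forth : forall q s s', P q.+1 s s' ->
  forall v, exists v', P q (v :: s) (v' :: s').

Hypothesis P_back : forall q s s', P q.+1 s s' ->
  forall v', exists v, P q (v :: s) (v' :: s').

Lemma ef_sat phi q s s' : qdepth phi <= q -> P q s s' ->
  sat None (seq_env s) phi = sat None (seq_env s') phi.
Proof.
elim: phi q s s' => [t1 t2|t1 t2|f IH|f IHf g IHg|f IH] q s s' /= Hq Pss'.
1,2: have [ss' Hiso] := P_iso Pss';
  case: t1 => [i|]; case: t2 => [j|] //=; try by do 2 case: (seq_env _ _).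
- apply: (partial_iso_atomic (f := eq_op) (f' := eq_op)) => // a b a' b' *.
  by have [] := Hiso i j a b a' b'.
- apply: (partial_iso_atomic (f := @gadj G) (f' := @gadj G')) => // a b a' b' *.
  by have [] := Hiso i j a b a' b'.
- by rewrite (IH q s s').
- by move: Hq; rewrite geq_max => /andP[Hf Hg]; rewrite (IHf q s s') // (IHg q s s').
- case: q Hq Pss' => // q Hq Pss'.
  apply/existsP/existsP => -[v Hv].
  + have [v' Pvv'] := P_forth Pss' v; exists v'.
    by rewrite sat_seq_env_cons -(IH q (v :: s)) -?sat_seq_env_cons.
  + have [w Pwv] := P_back Pss' v; exists w.
    by rewrite sat_seq_env_cons (IH q (w :: s) (v :: s')) -?sat_seq_env_cons.
Qed.

End EhrenfeuchtFraisse.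

(** * The graphs *)

Notation Vtx m K := ('I_m.+1 + {ffun 'I_m.+1 -> 'I_K})%type.

Definition vtx_adj {m K : nat} (k : nat) (u w : Vtx m K) : bool :=
  match u, w with
  | inl a, inl a' => a != a'
  | inl a, inr b | inr b, inl a => b a < k
  | inr _, inr _ => false
  end.

Lemma vtx_adj_sym m K k : symmetric (@vtx_adj m K k).
Proof. by move=> [a|b] [a'|b'] //=; rewrite eq_sym. Qed.

Lemma vtx_adj_irr m K k : irreflexive (@vtx_adj m K k).
Proof. by move=> [a|b] /=; rewrite ?eqxx. Qed.

Definition clique_fun_graph (m K k : nat) : fsgraph :=
  @FGraph #|{: Vtx m K}| (fun i j => vtx_adj k (enum_val i) (enum_val j))
    (fun i j => vtx_adj_sym k _ _) (fun i => vtx_adj_irr k _).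

Definition to_vtx {m K k : nat} (v : vert (clique_fun_graph m K k)) : Vtx m K :=
  @enum_val (Vtx m K) predT v.

Definition of_vtx {m K k : nat} (u : Vtx m K) : vert (clique_fun_graph m K k) :=
  @enum_rank (Vtx m K) u.

Section Vertices.

Variables m K k : nat.

Local Notation G := (clique_fun_graph m K k).

Lemma to_vtxK : cancel (@to_vtx m K k) of_vtx. Proof. exact: enum_valK. Qed.

Lemma of_vtxK : cancel (@of_vtx m K k) to_vtx. Proof. exact: enum_rankK. Qed.

Lemma to_vtx_inj : injective (@to_vtx m K k). Proof. exact: can_inj to_vtxK. Qed.

Lemma gadj_to_vtx (v w : vert G) : gadj v w = vtx_adj k (to_vtx v) (to_vtx w).
Proof. by []. Qed.

Lemma gsize_clique_fun_graph : gsize G = m.+1 + K ^ m.+1.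
Proof. by rewrite /= card_sum card_ord card_ffun !card_ord. Qed.

End Vertices.

Section Traces.

Variables m K k : nat.

Implicit Types (x : seq (Vtx m K)) (u w : Vtx m K) (a : 'I_m.+1) (T : seq bool).

Definition is_clique u : bool := if u is inl _ then true else false.

Definition fun_adj a u : bool := if u is inr b then b a < k else false.

Definition trace a x : seq bool := map (fun_adj a) x.

Definition cell x T : {set 'I_m.+1} := [set a | (inl a \notin x) && (trace a x == T)].

Definition trace_count x T : nat := #|cell x T|.

Definition atype u w : bool * bool * bool := (u == w, is_clique u, vtx_adj k u w).

Lemma trace_nth a x j : j < size x ->
  nth false (trace a x) j = fun_adj a (nth (inl ord0) x j).
Proof. by move=> jx; rewrite (nth_map (inl ord0)). Qed.

Lemma trace_count_size x T : size T != size x -> trace_count x T = 0.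
Proof.
move=> sT; apply/eqP; rewrite cards_eq0; apply/eqP/setP => a; rewrite !inE.
by case: eqP; rewrite ?andbF // => trT; move: sT; rewrite -trT size_map eqxx.
Qed.

Lemma trace_count_cons u x c T :
  trace_count (u :: x) (c :: T) =
  #|[set a | [&& inl a != u, inl a \notin x, fun_adj a u == c & trace a x == T]]|.
Proof. by apply: eq_card => a; rewrite !inE /= eqseq_cons negb_or -!andbA. Qed.

Lemma trace_count_cons_old x j c T : j < size x ->
  trace_count (nth (inl ord0) x j :: x) (c :: T) =
  if nth false T j == c then trace_count x T else 0.
Proof.
move=> jx; rewrite trace_count_cons; set u := nth _ x j.
have ux : u \in x by apply: mem_nth.
have -> : [set a | [&& inl a != u, inl a \notin x, fun_adj a u == c & trace a x == T]] =
          [set a | [&& inl a \notin x, trace a x == T & nth false T j == c]].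
  apply/setP => a; rewrite !inE.
  case: (boolP (inl a \in x)) => /= ax; first by rewrite andbF.
  have -> : inl a != u by apply: contraNneq ax => ->.
  case: (trace a x =P T) => [<-|_]; last by rewrite !andbF.
  by rewrite trace_nth // andbT.
case: eqP => _; first by apply: eq_card => a; rewrite !inE andbT.
by apply/eqP; rewrite cards_eq0; apply/eqP/setP => a; rewrite !inE !andbF.
Qed.

Lemma trace_count_cons_clique x a0 c T : inl a0 \notin x ->
  trace_count (inl a0 :: x) (c :: T) =
  if c then 0 else trace_count x T - (trace a0 x == T).
Proof.
move=> a0x; rewrite trace_count_cons; case: c => /=.
  by apply/eqP; rewrite cards_eq0; apply/eqP/setP => a; rewrite !inE /= !andbF.
rewrite /trace_count [in RHS](cardsD1 a0) !inE a0x /= addKn.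
by apply: eq_card => a; rewrite !inE.
Qed.

Lemma trace_count_cons_fun x b c T :
  trace_count (inr b :: x) (c :: T) = #|[set a in cell x T | (b a < k) == c]|.
Proof.
rewrite trace_count_cons; apply: eq_card => a; rewrite !inE /=.
by case: (_ \in x); case: (_ == c); case: (_ == T).
Qed.

Lemma atype_fresh u x i : u \notin x -> i < size x ->
  atype u (nth (inl ord0) x i) = (false, is_clique u, vtx_adj k u (nth (inl ord0) x i)) /\
  atype (nth (inl ord0) x i) u =
    (false, is_clique (nth (inl ord0) x i), vtx_adj k u (nth (inl ord0) x i)).
Proof.
move=> ux ix; have xiu : nth (inl ord0) x i != u.
  by apply: contraNneq ux => <-; apply: mem_nth.
by rewrite /atype (negbTE xiu) eq_sym (negbTE xiu) vtx_adj_sym.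
Qed.

Lemma vtx_adj_fresh_clique a x i : inl a \notin x -> i < size x ->
  vtx_adj k (inl a) (nth (inl ord0) x i) =
  is_clique (nth (inl ord0) x i) || nth false (trace a x) i.
Proof.
move=> ax ix; rewrite trace_nth //; have := mem_nth (inl ord0) ix.
by case: (nth _ x i) => [a'|b] //= a'x; apply: contraNneq ax => ->.
Qed.

End Traces.

(** * The game invariant *)

(* The room condition leaves enough values below and above the threshold to
   make a new function vertex differ from all those already played. *)
Definition ef_inv {m K m' K' : nat} (k k' q : nat)
    (x : seq (Vtx m K)) (x' : seq (Vtx m' K')) : Prop :=
  [/\ size x = size x',
      forall i j, i < size x -> j < size x ->
        atype k (nth (inl ord0) x i) (nth (inl ord0) x j) =
        atype k' (nth (inl ord0) x' i) (nth (inl ord0) x' j),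
      forall T, minn (trace_count k x T) (2 ^ q) = minn (trace_count k' x' T) (2 ^ q),
      size x + q < minn k (K - k) & size x + q < minn k' (K' - k')].

Lemma minn_pow2S a b q :
  minn a (2 ^ q.+1) = minn b (2 ^ q.+1) -> minn a (2 ^ q) = minn b (2 ^ q).
Proof. by rewrite expnS; lia. Qed.

Definition split_size (c c' c1 h : nat) : nat :=
  if c == c' then c1 else if c1 < h then c1 else if c - c1 < h then c' - (c - c1) else h.

Lemma split_sizeP c c' c1 h : minn c (h + h) = minn c' (h + h) -> c1 <= c ->
  [/\ split_size c c' c1 h <= c', minn c1 h = minn (split_size c c' c1 h) h &
      minn (c - c1) h = minn (c' - split_size c c' c1 h) h].
Proof.
rewrite /split_size => cc' c1c.
case: eqP => [<-|_]; first by split.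
by case: ltnP => ?; [|case: ltnP => ?]; split; lia.
Qed.

Lemma exists_fun_with_adj m K k (Y : pred 'I_m.+1) (x : seq (Vtx m K)) :
  size x < minn k (K - k) ->
  exists2 b : {ffun 'I_m.+1 -> 'I_K}, forall a, (b a < k) = Y a & inr b \notin x.
Proof.
move=> xk; have kK : k <= K by lia.
pose vals := pmap (fun u : Vtx m K => if u is inr b then Some (b ord0) else None) x.
have valsx : size vals <= size x by rewrite size_pmap count_size.
have pick c : size x < #|[set v : 'I_K | (v < k) == c]|.
  by rewrite card_ltn_ord //; case: c; lia.
(* b is made fresh by its value at ord0. *)
have [v0 v0Y v0vals] := exists_notin (leq_ltn_trans valsx (pick (Y ord0))).
have [lo lok] := card_gt0P (leq_ltn_trans (leq0n _) (pick true)).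
have [hi hik] := card_gt0P (leq_ltn_trans (leq0n _) (pick false)).
rewrite !inE in v0Y lok hik.
exists [ffun a => if a == ord0 then v0 else if Y a then lo else hi].
  move=> a; rewrite ffunE; case: eqP => [->|_] /=; first exact: (eqP v0Y).
  by case: (Y a); [exact: (eqP lok) | exact: (eqP hik)].
apply: contra v0vals => bx; rewrite mem_pmap; apply/mapP.
by exists (inr [ffun a => if a == ord0 then v0 else if Y a then lo else hi]);
  rewrite //= ffunE eqxx.
Qed.

Section EFInvariant.

Variables m K m' K' k k' : nat.

Implicit Type x : seq (Vtx m K).

Lemma ef_inv_sym q x (x' : seq (Vtx m' K')) : ef_inv k k' q x x' -> ef_inv k' k q x' x.
Proof. by case=> ss' Hat Hcnt Hx Hx'; split; rewrite -?ss' // => i j *; rewrite Hat. Qed.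

Lemma ef_inv_is_clique q x (x' : seq (Vtx m' K')) i : ef_inv k k' q x x' -> i < size x ->
  is_clique (nth (inl ord0) x i) = is_clique (nth (inl ord0) x' i).
Proof. by case=> _ Hat _ _ _ ix; have [] := Hat i i ix ix. Qed.

Lemma ef_inv_forth_old q x (x' : seq (Vtx m' K')) j : ef_inv k k' q.+1 x x' -> j < size x ->
  ef_inv k k' q (nth (inl ord0) x j :: x) (nth (inl ord0) x' j :: x').
Proof.
case=> ss' Hat Hcnt Hx Hx' jx; split => /=.
- by rewrite ss'.
- by move=> [|i] [|l] /= ix lx; apply: Hat.
- move=> [|c T]; first by rewrite !trace_count_size.
  rewrite !trace_count_cons_old -?ss' //.
  by case: ifP => // _; apply: minn_pow2S.
- by rewrite addSnnS.
- by rewrite addSnnS.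
Qed.

Lemma ef_inv_forth_clique q x (x' : seq (Vtx m' K')) a : ef_inv k k' q.+1 x x' -> inl a \notin x ->
  exists a', ef_inv k k' q (inl a :: x) (inl a' :: x').
Proof.
move=> inv; case: (inv) => ss' Hat Hcnt Hx Hx' ax.
have [a' a'cell] : exists a', a' \in cell k' x' (trace k a x).
  apply/card_gt0P; have := Hcnt (trace k a x); rewrite /trace_count.
  have : 0 < #|cell k x (trace k a x)| by apply/card_gt0P; exists a; rewrite inE ax eqxx.
  by have := expn_gt0 2 q.+1; lia.
move: a'cell; rewrite inE => /andP[a'x /eqP tr'].
exists a'; split => /=.
- by rewrite ss'.
- move=> [|i] [|l] /= ix lx; first by rewrite /atype /= !eqxx.
  + have lx' : l < size x' by rewrite -ss'.
    have [-> _] := atype_fresh k ax lx; have [-> _] := atype_fresh k' a'x lx'.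
    by rewrite !vtx_adj_fresh_clique // tr' (ef_inv_is_clique inv).
  + have ix' : i < size x' by rewrite -ss'.
    have [_ ->] := atype_fresh k ax ix; have [_ ->] := atype_fresh k' a'x ix'.
    by rewrite !vtx_adj_fresh_clique // tr' (ef_inv_is_clique inv).
  + exact: Hat.
- move=> [|c T]; first by rewrite !trace_count_size.
  rewrite !trace_count_cons_clique // tr'; case: c => //.
  by move: (Hcnt T); rewrite expnS; case: (_ == T); lia.
- by rewrite addSnnS.
- by rewrite addSnnS.
Qed.

Lemma ef_inv_cons_fun q x (x' : seq (Vtx m' K')) b b' :
  ef_inv k k' q.+1 x x' -> inr b \notin x -> inr b' \notin x' ->
  (forall l, l < size x ->
    vtx_adj k (inr b) (nth (inl ord0) x l) = vtx_adj k' (inr b') (nth (inl ord0) x' l)) ->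
  (forall T c, minn #|[set a in cell k x T | (b a < k) == c]| (2 ^ q) =
               minn #|[set a in cell k' x' T | (b' a < k') == c]| (2 ^ q)) ->
  ef_inv k k' q (inr b :: x) (inr b' :: x').
Proof.
move=> inv bx b'x adj_b cnt; case: (inv) => ss' Hat _ Hx Hx'; split => /=.
- by rewrite ss'.
- move=> [|i] [|l] /= ix lx; first by rewrite /atype /= !eqxx.
  + have lx' : l < size x' by rewrite -ss'.
    have [-> _] := atype_fresh k bx lx; have [-> _] := atype_fresh k' b'x lx'.
    by rewrite adj_b.
  + have ix' : i < size x' by rewrite -ss'.
    have [_ ->] := atype_fresh k bx ix; have [_ ->] := atype_fresh k' b'x ix'.
    by rewrite adj_b // (ef_inv_is_clique inv).
  + exact: Hat.
- move=> [|c T]; first by rewrite !trace_count_size.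
  by rewrite !trace_count_cons_fun.
- by rewrite addSnnS.
- by rewrite addSnnS.
Qed.

Lemma ef_inv_forth_fun q x (x' : seq (Vtx m' K')) b :
  ef_inv k k' q.+1 x x' -> inr b \notin x ->
  exists b', ef_inv k k' q (inr b :: x) (inr b' :: x').
Proof.
move=> inv bx; case: (inv) => ss' Hat Hcnt _ Hx'.
pose c1 T := #|[set a in cell k x T | b a < k]|.
pose j' T := split_size (trace_count k x T) (trace_count k' x' T) (c1 T) (2 ^ q).
(* On positions of x' the adjacency of b' is forced; in each cell of unused clique
   vertices, the first j' of them are made adjacent to b'. *)
pose Y' a' := if inl a' \in x' then vtx_adj k (inr b) (nth (inl ord0) x (index (inl a') x'))
  else a' \in take (j' (trace k' a' x')) (enum (cell k' x' (trace k' a' x'))).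
have [b' b'Y b'x] := @exists_fun_with_adj m' K' k' Y' x' ltac:(rewrite -ss'; lia).
exists b'; apply: ef_inv_cons_fun => // [l lx|T cb].
  have lx' : l < size x' by rewrite -ss'.
  have := ef_inv_is_clique inv lx.
  case xl: (nth _ x l) => [al|bl]; case xl': (nth _ x' l) => [al'|bl'] //= _.
  rewrite b'Y /Y' -xl' mem_nth //.
  have i0x : index (nth (inl ord0) x' l) x' < size x by rewrite ss' index_mem mem_nth.
  move: (Hat _ l i0x lx) => /(congr1 (fun t => t.1.1)) /=.
  by rewrite nth_index ?mem_nth // eqxx => /eqP ->; rewrite xl.
rewrite !card_set_eqb; have c1c : c1 T <= trace_count k x T.
  by apply/subset_leq_card/subsetP => a; rewrite inE => /andP[].
have cT : minn (trace_count k x T) (2 ^ q + 2 ^ q) = minn (trace_count k' x' T) (2 ^ q + 2 ^ q).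
  by move: (Hcnt T); rewrite expnS mul2n addnn.
have [j'c' c1j' rest] := split_sizeP cT c1c.
have -> : #|[set a in cell k' x' T | b' a < k']| = j' T.
  apply: (card_take_enum (Y := fun a => b' a < k')) j'c' => a.
  by rewrite inE => /andP[a'x /eqP trT]; rewrite b'Y /Y' (negbTE a'x) trT.
by case: cb.
Qed.

Lemma ef_inv_forth q x (x' : seq (Vtx m' K')) : ef_inv k k' q.+1 x x' ->
  forall u, exists u', ef_inv k k' q (u :: x) (u' :: x').
Proof.
move=> inv u; case: (boolP (u \in x)) => [ux|].
  exists (nth (inl ord0) x' (index u x)).
  by rewrite -{1}(nth_index (inl ord0) ux); apply: ef_inv_forth_old; rewrite ?index_mem.
case: u => [a|b] ux.
- by have [a' ?] := ef_inv_forth_clique inv ux; exists (inl a').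
- by have [b' ?] := ef_inv_forth_fun inv ux; exists (inr b').
Qed.

End EFInvariant.

Lemma ef_inv_back m K m' K' k k' q (x : seq (Vtx m K)) (x' : seq (Vtx m' K')) :
  ef_inv k k' q.+1 x x' -> forall u', exists u, ef_inv k k' q (u :: x) (u' :: x').
Proof.
move=> /ef_inv_sym inv u'; have [u ?] := ef_inv_forth inv u'.
by exists u; apply: ef_inv_sym.
Qed.

Lemma ef_inv_sat m K k m' K' k' q (s : seq (vert (clique_fun_graph m K k)))
    (s' : seq (vert (clique_fun_graph m' K' k'))) phi :
  qdepth phi <= q -> ef_inv k k' q (map to_vtx s) (map to_vtx s') ->
  sat None (seq_env s) phi = sat None (seq_env s') phi.
Proof.
apply: (ef_sat (P := fun q s s' => ef_inv k k' q (map to_vtx s) (map to_vtx s'))).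
- move=> {}q {}s {}s' [ss' Hat _ _ _]; move: ss'; rewrite !size_map => ss'.
  split=> // i j a b a' b' /(seq_envP a) [ix <-] /(seq_envP a) [jx <-].
  move=> /(seq_envP a') [_ <-] /(seq_envP a') [_ <-].
  have := Hat i j; rewrite size_map !(nth_map a) // !(nth_map a') -?ss' //.
  by case/(_ ix jx) => eqij _ adjij; rewrite !gadj_to_vtx adjij -!(inj_eq (@to_vtx_inj _ _ _)) eqij.
- move=> {}q {}s {}s' inv v; have [u' ?] := ef_inv_forth inv (to_vtx v).
  by exists (of_vtx u'); rewrite /= of_vtxK.
- move=> {}q {}s {}s' inv v'; have [u ?] := ef_inv_back inv (to_vtx v').
  by exists (of_vtx u); rewrite /= of_vtxK.
Qed.

Definition tuple_seq (G : fsgraph) (p : nat) (v : {ffun 'I_p -> vert G}) : seq (vert G) :=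
  [seq v i | i <- enum 'I_p].

Lemma tuple_env_seq_env (G : fsgraph) p (v : {ffun 'I_p -> vert G}) :
  tuple_env v =1 seq_env (tuple_seq v).
Proof.
move=> k; rewrite /tuple_env /seq_env -map_comp; case: (ltnP k p) => kp.
  rewrite insubT /= (nth_map (Ordinal kp)) ?size_enum_ord //.
  by congr (Some (v _)); apply: val_inj; rewrite /= nth_enum_ord.
by rewrite insubF ?nth_default ?size_map -?enumT ?size_enum_ord // ltnNge kp.
Qed.

Section Generic.

Variables m K k : nat.

Implicit Type x : seq (Vtx m K).

Definition generic p c x : bool :=
  [&& size x == p, all (fun u => ~~ is_clique u) x &
      [forall T : p.-tuple bool, c <= trace_count k x T]].

Lemma generic_uniq p c x : 0 < c -> generic p c x -> uniq x.
Proof.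
move=> c0 /and3P[/eqP sx _ /forallP cnt]; apply/(uniqP (inl ord0)) => i j ix jx eqij.
have sT : size (mkseq (pred1 i) p) == p by rewrite size_mkseq.
have [a] : exists a, a \in cell k x (mkseq (pred1 i) p).
  by apply/card_gt0P; apply: leq_trans c0 (cnt (Tuple sT)).
rewrite inE => /andP[_ /eqP trx]; apply/eqP.
have := congr1 (nth false ^~ j) trx; have := congr1 (nth false ^~ i) trx.
by rewrite /= !trace_nth // !nth_mkseq -?sx // eqij /= eqxx => -> /esym; rewrite eq_sym.
Qed.

Lemma generic_atype p c x i j : 0 < c -> generic p c x -> i < size x -> j < size x ->
  atype k (nth (inl ord0) x i) (nth (inl ord0) x j) = (i == j, false, false).
Proof.
move=> c0 gx ix jx; rewrite /atype nth_uniq ?(generic_uniq c0 gx) //.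
case/and3P: gx => _ /(all_nthP (inl ord0)) fx _; move: (fx i ix) (fx j jx).
by case: (nth _ x i); case: (nth _ x j).
Qed.

End Generic.

Lemma generic_ef_inv m K k m' K' k' p q (x : seq (Vtx m K)) (x' : seq (Vtx m' K')) :
  generic k p (2 ^ q) x -> generic k' p (2 ^ q) x' ->
  p + q < minn k (K - k) -> p + q < minn k' (K' - k') -> ef_inv k k' q x x'.
Proof.
move=> gx gx' room room'; have c0 := expn_gt0 2 q.
case/and3P: (gx) => /eqP sx _ /forallP cnt; case/and3P: (gx') => /eqP sx' _ /forallP cnt'.
split; rewrite ?sx //.
- move=> i j ix jx.
  by rewrite (generic_atype c0 gx) ?sx // (generic_atype c0 gx') ?sx'.
- move=> T; case: (eqVneq (size T) p) => [sT|nT].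
    have sT' : size T == p by apply/eqP.
    by rewrite !(minn_idPr _) //; [apply: cnt' (Tuple sT') | apply: cnt (Tuple sT')].
  by rewrite !trace_count_size ?sx ?sx'.
Qed.

Lemma generic_sat m K k m' K' k' p phi
    (v : {ffun 'I_p -> vert (clique_fun_graph m K k)})
    (v' : {ffun 'I_p -> vert (clique_fun_graph m' K' k')}) :
  p + qdepth phi < minn k (K - k) -> p + qdepth phi < minn k' (K' - k') ->
  generic k p (2 ^ qdepth phi) (map to_vtx (tuple_seq v)) ->
  generic k' p (2 ^ qdepth phi) (map to_vtx (tuple_seq v')) ->
  sat None (tuple_env v) phi = sat None (tuple_env v') phi.
Proof.
move=> room room' gv gv'.
rewrite (eq_sat _ _ (tuple_env_seq_env v)) (eq_sat _ _ (tuple_env_seq_env v')).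
exact: ef_inv_sat (generic_ef_inv gv gv' room room').
Qed.

(** * Almost all tuples are generic *)

(* A tuple of function vertices is stored column by column.  The columns at
   distinct clique vertices are independent, so a block of L clique vertices
   misses a given pattern for at most a fraction (1 - 3^-p)^L of the tuples. *)
Section FunTuples.

Variables m K k p : nat.

Local Notation Cols := {ffun 'I_m.+1 -> {ffun 'I_p -> 'I_K}}.

Definition fun_tuple (W : Cols) : {ffun 'I_p -> vert (clique_fun_graph m K k)} :=
  [ffun i => of_vtx (inr [ffun a => W a i])].

Lemma fun_tuple_inj : injective fun_tuple.
Proof.
move=> W1 W2 /ffunP eqW; apply/ffunP => a; apply/ffunP => i.
move: (eqW i); rewrite !ffunE => /(congr1 to_vtx); rewrite !of_vtxK => -[/ffunP/(_ a)].
by rewrite !ffunE.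
Qed.

Definition col_match (T : {ffun 'I_p -> bool}) : {set {ffun 'I_p -> 'I_K}} :=
  [set col : {ffun 'I_p -> 'I_K} | [forall i, (col i < k) == T i]].

Definition covers L c (W : Cols) : bool :=
  [forall T, forall g : 'I_c, exists a : 'I_m.+1, (a %/ L == g) && (W a \in col_match T)].

Definition uncovered L (T : {ffun 'I_p -> bool}) (g : nat) : {set Cols} :=
  [set W : Cols | [forall a : 'I_m.+1, (a %/ L == g) ==> (W a \notin col_match T)]].

Lemma covers_generic L c W :
  covers L c W -> generic k p c (map to_vtx (tuple_seq (fun_tuple W))).
Proof.
move=> /forallP cov; have -> : map to_vtx (tuple_seq (fun_tuple W)) =
    [seq inr [ffun a => W a i] | i <- enum 'I_p].
  by rewrite -map_comp; apply: eq_map => i /=; rewrite ffunE of_vtxK.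
apply/and3P; split; first by rewrite size_map size_enum_ord.
  by apply/allP => u /mapP[i _ ->].
apply/forallP => T; have /forallP covT := cov [ffun i => tnth T i].
apply: (card_hits_blocks (L := L)) => g.
have /existsP[a /andP[/eqP ag aT]] := covT g; exists a => //.
rewrite inE; apply/andP; split; first by apply/negP => /mapP[].
rewrite /trace -map_comp -[T in _ == T]map_tnth_enum; apply/eqP/eq_map => i /=.
by move: aT; rewrite inE => /forallP/(_ i)/eqP; rewrite !ffunE.
Qed.

Lemma card_fun_tuples_le L c :
  (K ^ p) ^ m.+1 <=
  #|[set v : {ffun 'I_p -> vert (clique_fun_graph m K k)} |
      generic k p c (map to_vtx (tuple_seq v))]| +
  \sum_(Tg : {ffun 'I_p -> bool} * 'I_c) #|uncovered L Tg.1 Tg.2|.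
Proof.
have -> : (K ^ p) ^ m.+1 = #|[set: Cols]|.
  by rewrite cardsT card_ffun card_ord card_ffun !card_ord.
rewrite -(cardsID [set W | covers L c W]) setTI; apply: leq_add.
  rewrite -(card_imset _ fun_tuple_inj); apply/subset_leq_card/subsetP => v.
  by case/imsetP=> W; rewrite !inE => /covers_generic gW ->.
apply: card_le_sum_cover; apply/subsetP => W; rewrite !inE /covers.
rewrite andbT negb_forall => /existsP[T]; rewrite negb_forall => /existsP[g].
rewrite negb_exists => /forallP unc; apply/bigcupP; exists (T, g) => //.
by rewrite inE; apply/forallP => a; apply/implyP => ag; have := unc a; rewrite ag.
Qed.

Lemma card_col_match t T : k <= K -> t <= k -> t <= K - k -> t ^ p <= #|col_match T|.
Proof.
move=> kK tk tK; have -> : #|col_match T| = #|family (fun i => [set v : 'I_K | (v < k) == T i])|.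
  by apply: eq_card => col; rewrite !inE; apply/forallP/familyP => H i; have := H i; rewrite inE.
rewrite card_family_prod -{1}(card_ord p) -prod_nat_const.
by apply: leq_prod => i _; rewrite card_ltn_ord //; case: (T i).
Qed.

Lemma card_uncovered t L T g : k <= K -> t <= k -> t <= K - k ->
  #|uncovered L T g| <=
  (K ^ p - t ^ p) ^ #|[set a : 'I_m.+1 | a %/ L == g]| *
  (K ^ p) ^ (m.+1 - #|[set a : 'I_m.+1 | a %/ L == g]|).
Proof.
move=> kK tk tK; have allK : #|{: {ffun 'I_p -> 'I_K}}| = K ^ p by rewrite card_ffun !card_ord.
have -> : #|uncovered L T g| =
    #|family (fun a : 'I_m.+1 => if a %/ L == g then ~: col_match T else setT)|.
  apply: eq_card => W; rewrite !inE; apply/forallP/familyP => H a; have := H a;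
    by case: ifP => ag; rewrite ?inE //= => ->.
rewrite card_family_prod; apply: leq_trans
  (_ : _ <= \prod_(a : 'I_m.+1) (if a %/ L == g then K ^ p - t ^ p else K ^ p)) _.
  apply: leq_prod => a _; case: ifP => _; last by rewrite cardsT allK.
  by have := card_col_match T kK tk tK; have := cardsC (col_match T); rewrite allK; lia.
by rewrite prod_nat_if card_ord.
Qed.

End FunTuples.

Definition tn n := n.+1 * n.+1.

Definition Kn n := 3 * tn n.

Definition kn n := if odd n then tn n else 2 * tn n.

Definition Gn n := clique_fun_graph n (Kn n) (kn n).

Lemma kn_bounds n : [/\ tn n <= kn n, tn n <= Kn n - kn n & kn n <= Kn n].
Proof. by rewrite /kn /Kn; case: odd; split; lia. Qed.

Lemma room_Gn n p q : p + q <= n -> p + q < minn (kn n) (Kn n - kn n).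
Proof.
have [tk tK _] := kn_bounds n; have : n < tn n by rewrite /tn; nia.
by rewrite leq_min; lia.
Qed.

Definition generic_tuples p c n :=
  [set v : {ffun 'I_p -> vert (Gn n)} | generic (kn n) p c (map to_vtx (tuple_seq v))].

Lemma card_tuples (G : fsgraph) p : #|{: {ffun 'I_p -> vert G}}| = (gsize G ^ p)%N.
Proof. by rewrite card_ffun !card_ord. Qed.

Lemma generic_sat_Gn phi n n' (v : {ffun 'I_(fbound phi) -> vert (Gn n)})
    (v' : {ffun 'I_(fbound phi) -> vert (Gn n')}) :
  (fbound phi + qdepth phi <= n)%N -> (fbound phi + qdepth phi <= n')%N ->
  v \in generic_tuples (fbound phi) (2 ^ qdepth phi) n ->
  v' \in generic_tuples (fbound phi) (2 ^ qdepth phi) n' ->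
  sat None (tuple_env v) phi = sat None (tuple_env v') phi.
Proof. by move=> /room_Gn room /room_Gn room'; rewrite !inE; apply: generic_sat. Qed.

Section GenericRatio.

Local Open Scope R_scope.

Lemma fun_ratio_ge n p :
  1 - INR p / 3 / INR n.+1 <= (INR (Kn n ^ n.+1)%N / INR (gsize (Gn n))) ^ p.
Proof.
set F := (Kn n ^ n.+1)%N; set N := gsize (Gn n).
have NF : INR N = INR n.+1 + INR F by rewrite /N gsize_clique_fun_graph INR_addn.
have FK : 3 * INR n.+1 * INR n.+1 <= INR F.
  have KF : (Kn n <= F)%N by rewrite -{1}(expn1 (Kn n)) leq_pexp2l // /Kn /tn; lia.
  by have := INR_leq KF; rewrite /Kn /tn !INR_muln (_ : INR 3 = 3) /=; lra.
have n1 : 1 <= INR n.+1 by apply: (INR_leq (a := 1)).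
set x := INR n.+1 / INR N.
have F0 := pos_INR F.
have -> : INR F / INR N = 1 - x by rewrite /x NF; field; lra.
have x0 : 0 <= x by apply: Rle_div_r; lra.
have x3 : x * (3 * INR n.+1) <= 1.
  have -> : x * (3 * INR n.+1) = 3 * INR n.+1 * INR n.+1 / INR N by rewrite /x; field; lra.
  by apply: Rle_div_l; rewrite ?NF; nra.
have x1 : x <= 1 by nra.
apply: Rle_trans (bernoulli p (conj x0 x1)).
have p0 := pos_INR p; suff : INR p * x <= INR p / 3 / INR n.+1 by lra.
by apply: Rle_div_r => //; nra.
Qed.

Lemma uncovered_ratio_le n p L (T : {ffun 'I_p -> bool}) g :
  (L <= #|[set a : 'I_n.+1 | a %/ L == g]|)%N ->
  INR #|uncovered n (Kn n) (kn n) L T g| <= INR ((Kn n ^ p) ^ n.+1)%N * (1 - / 3 ^ p) ^ L.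
Proof.
move=> LB; have [tk tK kK] := kn_bounds n.
have := INR_leq (card_uncovered n L T g kK tk tK); move: LB.
set B := #|_|; set X := (Kn n ^ p)%N; set r := 1 - / 3 ^ p => LB bound.
have Bn : (B <= n.+1)%N by rewrite -[X in (_ <= X)%N](card_ord n.+1) max_card.
have [i0 i1] := inv_pow3_bounds p.
have tX : (tn n ^ p <= X)%N by rewrite /X /Kn expnMn leq_pmull ?expn_gt0.
have Xt : INR (X - tn n ^ p) = INR X * r.
  have I3 : INR 3 = 3 by rewrite /=; lra.
  rewrite INR_subn // /X !INR_expn /Kn INR_muln I3 Rpow_mult_distr /r.
  by field; apply: pow_nonzero; lra.
apply: (Rle_trans _ _ _ bound).
rewrite INR_muln (INR_expn (X - _)) (INR_expn X (n.+1 - B)) (INR_expn X n.+1).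
rewrite Xt Rpow_mult_distr.
rewrite -[in X in _ <= X](subnKC Bn) -plusE pow_add.
have rBL : r ^ B <= r ^ L by apply: pow_le_decr => //; rewrite /r; split; lra.
have XB := pow_le (INR X) B (pos_INR X); have Xm := pow_le (INR X) (n.+1 - B) (pos_INR X).
by have := Rmult_le_compat_l _ _ _ (Rmult_le_pos _ _ XB Xm) rBL; lra.
Qed.

Lemma card_generic_tuples_ge n p q :
  INR (Kn n ^ n.+1) ^ p * (1 - INR (2 ^ p * 2 ^ q) * (1 - / 3 ^ p) ^ (n.+1 %/ 2 ^ q)) <=
  INR #|generic_tuples p (2 ^ q) n|.
Proof.
set L := (n.+1 %/ 2 ^ q)%N; set C := INR (2 ^ p * 2 ^ q); set r := 1 - / 3 ^ p.
set F := (Kn n ^ n.+1)%N.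
pose bad := (\sum_(Tg : {ffun 'I_p -> bool} * 'I_(2 ^ q))
  #|uncovered n (Kn n) (kn n) L Tg.1 Tg.2|)%N.
have cnt : (F ^ p <= #|generic_tuples p (2 ^ q) n| + bad)%N.
  by rewrite /F expnAC; apply: card_fun_tuples_le.
have badC : INR bad <= C * (INR F ^ p * r ^ L).
  apply: Rle_trans (sum_INR_le (M := INR F ^ p * r ^ L) _) _.
    move=> [T g]; rewrite /F -INR_expn expnAC.
    by apply: uncovered_ratio_le; apply: card_block_geq.
  by rewrite card_prod card_ffun card_bool !card_ord /C INR_muln; lra.
by have := INR_leq cnt; rewrite INR_addn INR_expn; lra.
Qed.

Lemma generic_ratio_ge n p q :
  1 - INR p / 3 / INR n.+1 - INR (2 ^ p * 2 ^ q) * (1 - / 3 ^ p) ^ (n.+1 %/ 2 ^ q) <=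
  INR #|generic_tuples p (2 ^ q) n| / INR (gsize (Gn n) ^ p).
Proof.
set z := INR (2 ^ p * 2 ^ q) * _; set F := INR (Kn n ^ n.+1); set N := INR (gsize (Gn n)).
have N0 : 0 < N by apply: lt_0_INR; apply/ltP; rewrite gsize_clique_fun_graph.
have [y0 y1] : 0 <= (F / N) ^ p <= 1.
  have FN : F <= N by apply: INR_leq; rewrite gsize_clique_fun_graph leq_addl.
  split; first by apply/pow_le/Rle_div_r => //; rewrite Rmult_0_l; apply: pos_INR.
  by rewrite -(pow1 p); apply: pow_incr; split; [apply: Rle_div_r | apply: Rle_div_l];
    rewrite ?Rmult_0_l ?Rmult_1_l //; apply: pos_INR.
apply: Rle_trans (_ : (F / N) ^ p * (1 - z) <= _).
  have z0 : 0 <= z.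
    have [i0 i1] := inv_pow3_bounds p.
    by apply: Rmult_le_pos; [apply: pos_INR | apply: pow_le; lra].
  have fr : 1 - INR p / 3 / INR n.+1 <= (F / N) ^ p := fun_ratio_ge n p.
  have : 0 <= z * (1 - (F / N) ^ p) by apply: Rmult_le_pos; lra.
  lra.
rewrite INR_expn; apply: Rle_div_r; first exact: pow_lt.
rewrite Rmult_comm -Rmult_assoc -Rpow_mult_distr (_ : N * (F / N) = F); last by field; lra.
exact: card_generic_tuples_ge.
Qed.

Lemma Gn_FO_convergent : FO_convergent Gn.
Proof.
move=> phi _; rewrite /stone; set p := fbound phi; set q := qdepth phi.
have cvg (a : nat -> R) : (forall n, (p + q <= n)%N ->
    INR #|generic_tuples p (2 ^ q) n| / INR (gsize (Gn n) ^ p) <= a n <= 1) -> Un_cv a 1.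
  move=> bound; have [i0 i1] := inv_pow3_bounds p.
  apply: (@cvg_1_of_lower_bound a (INR p / 3) (INR (2 ^ p * 2 ^ q)) (1 - / 3 ^ p) (2 ^ q) (p + q)).
  - by split; lra.
  - by apply/lt_0_INR/ltP; rewrite muln_gt0 !expn_gt0.
  - by rewrite expn_gt0.
  - move=> n npq; have [lo hi] := bound n npq.
    by split => //; apply: Rle_trans lo; apply: generic_ratio_ge.
case: (classic (exists n (v : {ffun 'I_p -> vert (Gn n)}),
  [/\ (p + q <= n)%N, v \in generic_tuples p (2 ^ q) n & sat None (tuple_env v) phi])).
- case=> n0 [v0 [n0pq gv0 sv0]]; exists 1; apply: cvg => n npq.
  split; last exact: ratio_le1 (card_tuples _ _).
  apply: ratio_subset; apply/subsetP => v gv.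
  by rewrite inE (generic_sat_Gn npq n0pq gv gv0).
- move=> none; exists 0; apply: Un_cv_compl; apply: cvg => n npq.
  have disj : [disjoint generic_tuples p (2 ^ q) n & solutions None phi].
    rewrite disjoint_subset; apply/subsetP => v gv; rewrite !inE; apply/negP => sv.
    by apply: none; exists n, v.
  by split; [exact: ratio_disjoint (card_tuples _ _) disj | exact: ratio_compl_le1].
Qed.

End GenericRatio.

(** * A root that cannot be chosen convergently *)

(* xi(x_0) = exists y z, x_0 ~ y /\ x_0 ~ z /\ y <> z /\ ~ y ~ z, in de Bruijn
   notation. *)
Definition xi : formula :=
  FEx (FEx (FAnd (FAnd (FAdj (TVar 2) (TVar 1)) (FAdj (TVar 2) (TVar 0)))
                 (FAnd (FNot (FEq (TVar 1) (TVar 0))) (FNot (FAdj (TVar 1) (TVar 0)))))).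

Lemma sat1_xi (G : fsgraph) (v : vert G) :
  sat1 xi v = [exists y, exists z, [&& gadj v y && gadj v z, y != z & ~~ gadj y z]].
Proof. by []. Qed.

Lemma models_FEx (G : fsgraph) phi : models G (FEx phi) = [exists v : vert G, sat1 phi v].
Proof. by []. Qed.

Lemma stone_root_adj (G : fsgraph) (r : vert G) :
  stone (Some r) (FAdj TRoot (TVar 0)) = Rdiv (INR #|[set w | gadj r w]|) (INR (gsize G)).
Proof.
rewrite /stone [fbound _]/= expn1; congr (Rdiv (INR _) _).
have solP v : (v \in solutions (Some r) (FAdj TRoot (TVar 0))) = gadj r (v ord0).
  by rewrite inE /= /tuple_env insubT /=; congr (gadj r (v _)); apply: val_inj.
have inj : injective (fun w : vert G => [ffun _ : 'I_1 => w]).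
  by move=> w w' /ffunP/(_ ord0); rewrite !ffunE.
rewrite -(card_imset _ inj); apply: eq_card => v; rewrite solP.
apply/idP/imsetP => [rv|[w rw ->]]; last by rewrite ffunE; rewrite inE in rw.
by exists (v ord0); rewrite ?inE //; apply/ffunP => i; rewrite ffunE ord1.
Qed.

Section CliqueFunGraph.

Variables m K k : nat.

Local Notation G := (clique_fun_graph m K k).

Lemma sat1_xi_clique (v : vert G) : sat1 xi v -> exists a, to_vtx v = inl a.
Proof.
rewrite sat1_xi => /existsP[y /existsP[z]]; rewrite !gadj_to_vtx -(inj_eq (@to_vtx_inj _ _ _)).
case: (to_vtx v) => [a|b]; first by exists a.
case: (to_vtx y) => [ay|?]; case: (to_vtx z) => [az|?]; rewrite /= ?andbF // => /and3P[_].
by move=> + /negPn/eqP ayz; rewrite ayz eqxx.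
Qed.

Lemma models_xi : 1 < k <= K -> models G (FEx xi).
Proof.
case/andP=> k1 kK; have K0 : 0 < K by lia.
have K1 : 1 < K by lia.
pose b0 : {ffun 'I_m.+1 -> 'I_K} := [ffun _ => Ordinal K0].
pose b1 : {ffun 'I_m.+1 -> 'I_K} := [ffun _ => Ordinal K1].
rewrite models_FEx; apply/existsP; exists (of_vtx (inl ord0)); rewrite sat1_xi.
apply/existsP; exists (of_vtx (inr b0)); apply/existsP; exists (of_vtx (inr b1)).
rewrite !gadj_to_vtx !of_vtxK (inj_eq (can_inj (@of_vtxK _ _ _))) /= !ffunE /=.
rewrite (_ : inr b0 != inr b1) ?andbT; first by apply/andP; split; lia.
by apply/eqP => -[/ffunP/(_ ord0)]; rewrite !ffunE.
Qed.

Lemma card_gadj_of_vtx (u : Vtx m K) :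
  #|[set w : vert G | gadj (of_vtx u) w]| = #|[set u' | vtx_adj k u u']|.
Proof.
rewrite -(card_imset _ (can_inj (@of_vtxK m K k))); apply: eq_card => w.
rewrite inE gadj_to_vtx of_vtxK; apply/idP/imsetP => [uw|[u' uu' ->]].
  by exists (to_vtx w); rewrite ?inE ?to_vtxK.
by rewrite of_vtxK; rewrite inE in uu'.
Qed.

Lemma card_clique_nbhd (a : 'I_m.+1) : k <= K ->
  #|[set u : Vtx m K | vtx_adj k (inl a) u]| = m + k * K ^ m.
Proof.
move=> kK; rewrite card_set_sum; congr (_ + _).
  transitivity #|[set~ a]|; last by rewrite cardsC1 card_ord.
  by apply: eq_card => a'; rewrite !inE /= eq_sym.
have -> : #|[set b : {ffun 'I_m.+1 -> 'I_K} | vtx_adj k (inl a) (inr b)]| =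
    #|family (fun a' => if a' == a then [set v : 'I_K | v < k] else setT)|.
  apply: eq_card => b; rewrite inE /=; apply/idP/idP => [ba|/familyP/(_ a)].
    by apply/familyP => a'; case: eqP => [->|_]; rewrite inE.
  by rewrite eqxx inE.
rewrite card_family_prod (eq_bigr (fun a' => if a' == a then k else K)); last first.
  move=> a' _; case: eqP => _; last by rewrite cardsT card_ord.
  by rewrite -[RHS](card_ltn_ord true kK); apply: eq_card => v; rewrite !inE eqb_id.
rewrite prod_nat_if card_ord (_ : #|[set a' | a' == a]| = 1) ?expn1 ?subn1 //.
by rewrite -(cards1 a); apply: eq_card => a'; rewrite !inE.
Qed.

End CliqueFunGraph.

Section RootRatio.

Local Open Scope R_scope.

Lemma root_adj_ratio_Gn n (r : vert (Gn n)) : (0 < n)%N -> sat1 xi r ->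
  if odd n then stone (Some r) (FAdj TRoot (TVar 0)) <= 2 / 5
  else 3 / 5 <= stone (Some r) (FAdj TRoot (TVar 0)).
Proof.
move=> n0 /sat1_xi_clique[a ra]; have [_ _ kK] := kn_bounds n.
rewrite stone_root_adj -(to_vtxK r) ra card_gadj_of_vtx card_clique_nbhd //.
rewrite gsize_clique_fun_graph expnS.
set X := (tn n * Kn n ^ n)%N.
have -> : (Kn n * Kn n ^ n = 3 * X)%N by rewrite /X /Kn mulnA.
have -> : (kn n * Kn n ^ n = if odd n then X else 2 * X)%N.
  by rewrite /X /kn; case: odd; rewrite ?mulnA.
have tX : (n.+1 * n.+1 <= X)%N by rewrite leq_pmulr // expn_gt0 /Kn /tn; lia.
clearbody X; have N0 : 0 < INR (n.+1 + 3 * X) by apply: lt_0_INR; lia.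
case: (odd n).
- apply: Rle_div_l => //.
  have : (5 * (n + X) <= 2 * (n.+1 + 3 * X))%N by nia.
  by move/INR_leq; rewrite !INR_muln /=; lra.
- apply: Rle_div_r => //.
  have : (3 * (n.+1 + 3 * X) <= 5 * (n + 2 * X))%N by nia.
  by move/INR_leq; rewrite !INR_muln /=; lra.
Qed.

End RootRatio.

Theorem proposition7 :
  exists (G : nat -> fsgraph) (xi : formula),
    [/\ no_root xi, fbound xi = 1%N, FO_convergent G,
        (forall n, @models (G n) (FEx xi)) &
        ~ (exists r : forall n, vert (G n),
             (forall n, @sat1 (G n) xi (r n)) /\ @FO_convergent_rooted G r)].
Proof.
exists Gn, xi; split => //.
- exact: Gn_FO_convergent.
- move=> n; apply: models_xi; have [_ _ ->] := kn_bounds n.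
  by rewrite andbT /kn /tn; case: n => [|n] //; case: odd; nia.
- case=> r [xi_r cvg]; have [l] := cvg (FAdj TRoot (TVar 0)).
  apply: (@not_Un_cv_parity _ (2 / 5) (3 / 5) 1); first lra.
  by move=> n n1; apply: root_adj_ratio_Gn.
Qed.
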